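(* Let $A$ be a Noetherian integral domain with fraction field $K$, $M$ a finitely generated torsion-free $A$-module, $V=K\otimes_A M$ with $\dim_K V=n\ge 2$. Let $E(M\setminus\{0\})$ be the simplicial complex of all nonempty finite subsets of $M\setminus\{0\}$ and $E^*(M)$ its subcomplex of subsets of rank $<n$. Let $C_p(E(M\setminus\{0\}))$ be the free abelian group on ordered tuples $(v_0,\dots,v_p)$ of elements of $M\setminus\{0\}$ (ordered simplicial chains, with the usual alternating-sum boundary), $C_p(E^*(M))$ the subcomplex spanned by tuples of rank $<n$, and $\bar C_*=C_*(E(M\setminus\{0\}))/C_*(E^*(M))$. Then $\bar C_p=0$ for $p<n-1$, so every element of $\bar C_{n-1}$ is a cycle; composing the resulting map $\bar C_{n-1}\to H_{n-1}(\bar C_* )$ with the connecting homomorphism $H_{n-1}(\bar C_* )\to H_{n-2}(E^*(M))$, the inverse of the canonical subdivision isomorphism $H_{n-2}(\operatorname{sd}E^*(M))\xrightarrow{\sim}H_{n-2}(E^*(M))$, and the map $H_{n-2}(\operatorname{sd}E^*(M))\to H_{n-2}(T(V))=\operatorname{St}(V)$ induced by the simplicial map $\operatorname{sd}E^*(M)\to T(V)$ sending a vertex $Y$ of $\operatorname{sd}E^*(M)$ (a simplex of $E^*(M)$) to the $K$-span of $Y$, one obtains a homomorphism $\operatorname{ar}:\bar C_{n-1}\to \operatorname{St}(V)$ (with image in $\widetilde{\operatorname{St}}(V)$). Then for every $n$-tuple $Q=(v_0,\dots,v_{n-1})$ of elements of $M\setminus\{0\}$ spanning $V$, $\operatorname{ar}(Q)$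 equals the universal modular symbol $[v_0,\dots,v_{n-1}]$.
   Context: The rank of a subset of $M$ is the $K$-dimension of its span in $V$. $T(V)$ is the Tits building of $V$: vertices are nonzero proper subspaces of $V$, simplices are flags (nonempty chains under inclusion) of such subspaces; $\operatorname{St}(V)=H_{n-2}(T(V))$ is the Steinberg module, and $\widetilde{\operatorname{St}}(V)=\operatorname{St}(V)$ if $n>2$, while for $n=2$ it is the kernel of the augmentation $\operatorname{St}(V)=\mathbf{Z}[\text{lines of }V]\to\mathbf{Z}$ sending each line to $1$. For a simplicial complex $\Gamma$, $\operatorname{sd}\Gamma$ is its barycentric subdivision: vertices are the simplices of $\Gamma$, simplices are nonempty chains of simplices under inclusion; the subdivision isomorphism $H_*(\operatorname{sd}\Gamma)\cong H_*(\Gamma)$ is the canonical one, natural in $\Gamma$. Universal modular symbol: let $\Sigma_n$ be the simplicial complex whose vertices are the nonempty proper subsets of $\{0,\dots,n-1\}$ and whose simplices are chains of such subsets (the boundary of the barycentric subdivision of the simplex on $\{0,\dots,n-1\}$). Let $\zeta\in H_{n-2}(\Sigma_n)$ be the fundamental class given by the canonical orientation: the image under the connecting map of the class in $H_{n-1}$ of the subdivided simplex relative to its boundary corresponding to the oriented simplex $(0,1,\dots,n-1)$; for $n=2$ this is $\zeta=[\{1\}]-[\{0\}]$. For nonzero $v_0,\dots,v_{n-1}\in V$, let $\phi_Q:\Sigma_n\to T(V)$ send a vertex $I$ to the span of $\{v_i:i\in I\}$ (a simplicial map when the $v_i$ span $V$), and $[v_0,\dots,v_{n-1}]:=(\phi_Q)_*\zeta\in\operatorname{St}(V)$.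 *)

From HB Require Import structures.
From mathcomp Require Import all_boot all_order all_algebra all_field.
From mathcomp Require Import finmap.
Set Implicit Arguments. Unset Strict Implicit. Unset Printing Implicit Defensive.
Import Order.TTheory GRing.Theory Num.Theory.
Local Open Scope ring_scope.

Definition is_ideal (A : idomainType) (I : A -> Prop) : Prop :=
  I 0 /\ (forall x y, I x -> I y -> I (x - y)) /\ (forall a x, I x -> I (a * x)).

Definition noetherian (A : idomainType) : Prop :=
  forall I : A -> Prop, is_ideal I ->
    exists s : seq A, forall x, I x <->
      exists c : 'I_(size s) -> A, x = \sum_(i < size s) c i * s`_i.

Definition fin_gen (A : idomainType) (M : lmodType A) : Prop :=
  exists s : seq M, forall m : M,
    exists c : 'I_(size s) -> A, m = \sum_(i < size s) c i *: s`_i.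

Definition torsion_free (A : idomainType) (M : lmodType A) : Prop :=
  forall (a : A) (m : M), a *: m = 0 -> a = 0 \/ m = 0.

(* (V, iota) is K (x)_A M, K = Frac A, presented as the localisation of M at
   A \ {0}: iota is A-linear, every vector is a K-multiple of some iota m, and
   the kernel of iota is the torsion of M.  This characterises K (x)_A M up
   to unique isomorphism compatible with m |-> 1 (x) m. *)
Definition is_frac_tensor (A : idomainType) (M : lmodType A)
    (V : vectType {fraction A}) (iota : M -> V) : Prop :=
  [/\ forall m m', iota (m + m') = iota m + iota m',
      forall (a : A) m, iota (a *: m) = FracField.tofrac a *: iota m,
      forall x : V, exists (k : {fraction A}) (m : M), x = k *: iota m
    & forall m, iota m = 0 <-> exists a : A, a != 0 /\ a *: m = 0].

(* A chain on vertex type T is a formal Z-linear combination of tuples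
   (ordered simplices), represented by a list of (coefficient, tuple);
   two lists represent the same chain iff all coefficients agree. *)
Definition chain (T : eqType) := seq (int * seq T).

Definition coef (T : eqType) (c : chain T) (t : seq T) : int :=
  \sum_(x <- c | x.2 == t) x.1.

Definition chain_eq (T : eqType) (c d : chain T) : Prop :=
  forall t, coef c t = coef d t.

Definition chain_opp (T : eqType) (c : chain T) : chain T :=
  [seq (- x.1, x.2) | x <- c].

Definition chain_sub (T : eqType) (c d : chain T) : chain T :=
  c ++ chain_opp d.

Definition face (T : eqType) (i : nat) (t : seq T) : seq T :=
  take i t ++ drop i.+1 t.

Definition bd (T : eqType) (c : chain T) : chain T :=
  flatten [seq [seq ((-1) ^+ i * x.1, face i x.2) | i <- iota 0 (size x.2)]
          | x <- c].

Definition push (T U : eqType) (f : T -> U) (c : chain T) : chain U :=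
  [seq (x.1, map f x.2) | x <- c].

(* c is a p-chain of the (ordered chain complex of the) simplicial complex
   whose simplices are the vertex sets of the tuples satisfying S *)
Definition in_cx (T : eqType) (S : pred (seq T)) (p : nat) (c : chain T) :=
  forall t, coef c t != 0 -> size t = p.+1 /\ S t.

Definition is_cycle (T : eqType) (c : chain T) : Prop := chain_eq (bd c) [::].

Definition is_boundary (T : eqType) (S : pred (seq T)) (p : nat) (c : chain T) :=
  exists d, in_cx S p.+1 d /\ chain_eq (bd d) c.

Definition homologous (T : eqType) (S : pred (seq T)) (p : nat) (c d : chain T) :=
  is_boundary S p (chain_sub c d).

Definition is_flag (T : Type) (le : rel T) (s : seq T) : bool :=
  all (fun x => all (fun y => le x y || le y x) s) s.

Section Complexes.
Variables (A : idomainType) (M : lmodType A) (V : vectType {fraction A}).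
Variables (iota : M -> V) (n : nat).

Definition rank (s : seq M) : nat := \dim <<map iota s>>%VS.

Definition E_cx : pred (seq M) := fun t => all (fun m => m != 0) t.
Definition Estar_cx : pred (seq M) :=
  fun t => all (fun m => m != 0) t && (rank t < n)%N.

Definition Estar_simplex (Y : {fset M}) : bool :=
  (Y != fset0) && Estar_cx (enum_fset Y).
Definition sdEstar_cx : pred (seq {fset M}) :=
  fun s => all Estar_simplex s && is_flag (@fsubset M) s.

Definition tits_vertex (U : {vspace V}) : bool := (U != 0%VS) && (U != fullv).
Definition tits_cx : pred (seq {vspace V}) :=
  fun s => all tits_vertex s && is_flag (fun U W => (U <= W)%VS) s.

Definition spanY (Y : {fset M}) : {vspace V} := <<map iota (enum_fset Y)>>%VS.

(* simplicial approximation sd E* -> E* of the identity: a simplex Y goes to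
   one of its vertices; it induces the canonical subdivision isomorphism *)
Definition pick_vertex (Y : {fset M}) : M := head 0 (enum_fset Y).

(* z represents the preimage under the subdivision isomorphism of the class
   of the boundary of Q, i.e. of the image of Q under the connecting map *)
Definition ar_rep (Q : chain M) (z : chain {fset M}) : Prop :=
  [/\ in_cx sdEstar_cx n.-2 z, is_cycle z &
      homologous Estar_cx n.-2 (push pick_vertex z) (bd Q)].

End Complexes.

(* Delta_n: the full simplex on the vertices 0,...,n-1 (here as naturals
   < n), its boundary complex, sd Delta_n and Sigma_n = sd (boundary). *)
Definition Delta_cx (n : nat) : pred (seq nat) := fun t => all (fun i => i < n)%N t.
Definition bDelta_cx (n : nat) : pred (seq nat) :=
  fun t => all (fun i => i < n)%N t && ~~ all (fun i => i \in t) (iota 0 n).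
Definition sdDelta_cx (n : nat) : pred (seq {set 'I_n}) :=
  fun s => all (fun I => I != set0) s && is_flag (fun I J : {set 'I_n} => I \subset J) s.
Definition Sigma_cx (n : nat) : pred (seq {set 'I_n}) :=
  fun s => all (fun I => (I != set0) && (I != [set: 'I_n])) s
           && is_flag (fun I J : {set 'I_n} => I \subset J) s.

(* simplicial approximation sd Delta_n -> Delta_n of the identity:
   a nonempty subset goes to one of its elements *)
Definition pick_idx (n : nat) (I : {set 'I_n}) : nat :=
  head 0%N [seq val i | i in I].

Definition simplex_chain (n : nat) : chain nat := [:: (1%:Z, iota 0 n)].

(* w is a relative (n-1)-cycle of (sd Delta_n, Sigma_n) whose relative class
   corresponds under the subdivision isomorphism to the class of the oriented
   simplex (0,1,...,n-1) in H_{n-1}(Delta_n, boundary); the connecting map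
   sends it to the class of bd w, which is thus the fundamental class zeta
   in H_{n-2}(Sigma_n). *)
Definition zeta_rep (n : nat) (w : chain {set 'I_n}) : Prop :=
  [/\ in_cx (@sdDelta_cx n) n.-1 w, in_cx (@Sigma_cx n) n.-2 (bd w) &
      exists a b, [/\ in_cx (bDelta_cx n) n.-1 a, in_cx (Delta_cx n) n b &
        chain_eq (chain_sub (push (@pick_idx n) w) (simplex_chain n))
                 (a ++ bd b)]].

Definition phiQ (A : idomainType) (M : lmodType A) (V : vectType {fraction A})
    (iota : M -> V) (n : nat) (v : 'I_n -> M) (I : {set 'I_n}) : {vspace V} :=
  <<[seq iota (v i) | i in I]>>%VS.

From HB Require Import structures.
From mathcomp Require Import all_boot all_order all_algebra all_field.
From mathcomp Require Import finmap.
From mathcomp Require Import ring zify.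
Set Implicit Arguments. Unset Strict Implicit. Unset Printing Implicit Defensive.
Import GRing.Theory.
Local Open Scope ring_scope.

(* Everything is done at chain level, with two constructions.
   Barycentric subdivision: given a barycentre b(s) of each simplex s, the
   chain map sd(s) = b(s) * sd(bd s) (the cone with apex b(s)) writes s as a
   sum of flags of barycentres.  Acyclic carriers: two chain maps phi, chi
   whose values on s lie in a cone with apex a(s) are chain homotopic, via
   D(s) = a(s) * (phi s - chi s - D(bd s)).
   Three such homotopies do the work.  On Delta_n, the subdivided simplex
   w0 = sd(0,...,n-1) represents zeta.  Sending a set I of indices to
   {v_i : i in I} turns bd w into a cycle of sd E*(M) representing ar(Q),
   since its image in E*(M) is homologous to bd Q (homotopy carried by the
   v_i, i in the flag).  For any cycle z representing ar(Q), span(z) is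
   homologous in T(V) to span(sd(bd Q)) (homotopy carried by the subspaces of
   the span of the top simplex of the flag).  As span({v_i : i in I}) =
   phi_Q(I), the two representatives of the theorem are homologous. *)

Section Cochains.
Variable T : eqType.
Implicit Types (c d : chain T) (g : seq T -> int) (s t : seq T).

(* Chains are handled through their values on the cochains g : seq T -> int
   (see chain_eqP). *)
Definition pairing c g : int := \sum_(x <- c) x.1 * g x.2.

Lemma pairing_nil g : pairing [::] g = 0.
Proof. by rewrite /pairing big_nil. Qed.

Lemma pairing_cons x c g : pairing (x :: c) g = x.1 * g x.2 + pairing c g.
Proof. by rewrite /pairing big_cons. Qed.

Lemma pairing1 t g : pairing [:: (1, t)] g = g t.
Proof. by rewrite pairing_cons pairing_nil addr0 mul1r. Qed.

Lemma pairing_cat c d g : pairing (c ++ d) g = pairing c g + pairing d g.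
Proof. by rewrite /pairing big_cat. Qed.

Lemma pairing_opp c g : pairing (chain_opp c) g = - pairing c g.
Proof.
elim: c => [|x c IH]; first by rewrite !pairing_nil oppr0.
by rewrite /= !pairing_cons IH /= opprD mulNr.
Qed.

Lemma pairing_sub c d g : pairing (chain_sub c d) g = pairing c g - pairing d g.
Proof. by rewrite /chain_sub pairing_cat pairing_opp. Qed.

Lemma eq_pairing c g1 g2 : g1 =1 g2 -> pairing c g1 = pairing c g2.
Proof. by move=> H; apply: eq_bigr => x _; rewrite H. Qed.

Lemma eq_in_pairing c g1 g2 : (forall x, x \in c -> g1 x.2 = g2 x.2) ->
  pairing c g1 = pairing c g2.
Proof.
move=> H; rewrite /pairing big_seq_cond [RHS]big_seq_cond.
by apply: eq_bigr => x /andP[/H -> _].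
Qed.

Lemma pairingB c g1 g2 :
  pairing c (fun s => g1 s - g2 s) = pairing c g1 - pairing c g2.
Proof. by rewrite /pairing -sumrB; apply: eq_bigr => x _; rewrite mulrBr. Qed.

Lemma pairing0 c : pairing c (fun _ => 0) = 0.
Proof. by rewrite /pairing big1 // => x _; rewrite mulr0. Qed.

Lemma coef_nil t : coef [::] t = 0.
Proof. by rewrite /coef big_nil. Qed.

Lemma coef_cons x c t :
  coef (x :: c) t = (if x.2 == t then x.1 else 0) + coef c t.
Proof. by rewrite /coef big_cons; case: ifP => _ //; rewrite add0r. Qed.

Lemma coefE c t : coef c t = pairing c (fun s => (s == t)%:R).
Proof.
rewrite /coef /pairing big_mkcond; apply: eq_bigr => x _.
by case: (x.2 == t); rewrite ?mulr1 ?mulr0.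
Qed.

Lemma pairing_coef c g (U : seq (seq T)) : uniq U -> {subset map snd c <= U} ->
  pairing c g = \sum_(t <- U) coef c t * g t.
Proof.
move=> uU; elim: c => [|x c IH] sub.
  by rewrite pairing_nil big1 // => t _; rewrite coef_nil mul0r.
rewrite pairing_cons IH; last by move=> y yc; apply: sub; rewrite inE yc orbT.
have xU : x.2 \in U by apply: sub; rewrite inE eqxx.
under [RHS]eq_bigr => t _ do rewrite coef_cons mulrDl.
rewrite big_split /=; congr (_ + _).
rewrite (bigD1_seq x.2) //= eqxx big1 ?addr0 // => t /negbTE.
by rewrite eq_sym => ->; rewrite mul0r.
Qed.

Lemma chain_eqP c d : chain_eq c d <-> (forall g, pairing c g = pairing d g).
Proof.
split=> [H g|H t]; last by rewrite !coefE H.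
have uU : uniq (undup (map snd (c ++ d))) by apply: undup_uniq.
rewrite (pairing_coef g uU) ?(pairing_coef g uU).
- by apply: eq_bigr => t _; rewrite H.
- by move=> y yd; rewrite mem_undup map_cat mem_cat yd orbT.
- by move=> y yc; rewrite mem_undup map_cat mem_cat yc.
Qed.

Lemma in_cx_chain_eq (S : pred (seq T)) p c d :
  chain_eq c d -> in_cx S p c -> in_cx S p d.
Proof. by move=> E H t; rewrite -E; apply: H. Qed.

Lemma all_in_cx (S : pred (seq T)) p c :
  all (fun x => (size x.2 == p.+1) && S x.2) c -> in_cx S p c.
Proof.
move=> H t; have [/hasP[x xc /eqP <-] _|hn] := boolP (has (fun x => x.2 == t) c).
  by have /andP[/eqP -> ->] := allP H x xc.
by rewrite /coef big_hasC // eqxx.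
Qed.

(* in_cx only constrains net coefficients: entries outside the complex may
   cancel in c, but not in the normal form c'. *)
Lemma in_cx_normalize (S : pred (seq T)) p c : in_cx S p c ->
  exists c', (forall g, pairing c g = pairing c' g) /\
             all (fun x => (size x.2 == p.+1) && S x.2) c'.
Proof.
move=> H; exists [seq (coef c t, t) | t <- undup (map snd c) & coef c t != 0].
split=> [g|].
  rewrite (@pairing_coef c g (undup (map snd c)) (undup_uniq _)); last first.
    by move=> y; rewrite mem_undup.
  rewrite /pairing big_map big_filter [RHS]big_mkcond /=; apply: eq_bigr => t _.
  by case: ifP => // /negbFE /eqP ->; rewrite mul0r.
apply/allP => x /mapP[t]; rewrite mem_filter => /andP[Hc _] ->.
by have [-> St] := H t Hc; rewrite /= eqxx St.
Qed.

Lemma homologous_intro (S : pred (seq T)) p c d e :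
  all (fun x => (size x.2 == p.+2) && S x.2) e ->
  (forall g, pairing (bd e) g = pairing c g - pairing d g) ->
  homologous S p c d.
Proof.
move=> Ae Ee; exists e; split; first exact: all_in_cx.
by apply/chain_eqP => g; rewrite pairing_sub.
Qed.

Lemma face0 x s : face 0 (x :: s) = s.
Proof. by rewrite /face /= drop0. Qed.

Lemma faceS i x s : face i.+1 (x :: s) = x :: face i s.
Proof. by []. Qed.

Lemma size_face i s : (i < size s)%N -> size (face i s) = (size s).-1.
Proof.
elim: s i => [|x s IH] [|i] // H; first by rewrite face0.
by rewrite faceS /= IH // prednK // (leq_ltn_trans (leq0n i) H).
Qed.

Lemma mem_face i s y : y \in face i s -> y \in s.
Proof. by rewrite /face mem_cat => /orP[/mem_take|/mem_drop]. Qed.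

Definition cobd g s : int :=
  \sum_(i <- iota 0 (size s)) (-1) ^+ i * g (face i s).

Lemma cobd_cons g x s : cobd g (x :: s) = g s - cobd (fun u => g (x :: u)) s.
Proof.
rewrite /cobd /= big_cons expr0 mul1r face0; congr (_ + _).
rewrite -[1%N]/(1 + 0)%N iotaDl big_map -sumrN; apply: eq_bigr => i _.
by rewrite add1n faceS exprS mulN1r mulNr.
Qed.

Lemma eq_cobd g1 g2 s : g1 =1 g2 -> cobd g1 s = cobd g2 s.
Proof. by move=> H; apply: eq_bigr => i _; rewrite H. Qed.

Lemma eq_cobd_face g1 g2 s :
  (forall i, (i < size s)%N -> g1 (face i s) = g2 (face i s)) ->
  cobd g1 s = cobd g2 s.
Proof.
move=> H; rewrite /cobd big_seq_cond [RHS]big_seq_cond; apply: eq_bigr => i.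
by rewrite mem_iota add0n => /andP[/andP[_ /H ->] _].
Qed.

Lemma cobdB g1 g2 s : cobd (fun u => g1 u - g2 u) s = cobd g1 s - cobd g2 s.
Proof. by rewrite /cobd -sumrB; apply: eq_bigr => i _; rewrite mulrBr. Qed.

Lemma cobd_cobd g s : cobd (cobd g) s = 0.
Proof.
elim: s g => [|x s IH] g; first by rewrite /cobd big_nil.
rewrite cobd_cons (eq_cobd _ (fun u => cobd_cons g x u)) cobdB.
by rewrite IH subr0 subrr.
Qed.

Lemma pairing_bd c g : pairing (bd c) g = pairing c (cobd g).
Proof.
elim: c => [|x c IH]; first by rewrite /= !pairing_nil.
rewrite /= pairing_cat IH pairing_cons; congr (_ + _).
rewrite /pairing big_map /cobd mulr_sumr; apply: eq_bigr => i _ /=.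
by rewrite mulrCA mulrA.
Qed.

Lemma pairing_bd_bd c g : pairing (bd (bd c)) g = 0.
Proof.
by rewrite !pairing_bd (eq_pairing _ (fun s => cobd_cobd g s)) pairing0.
Qed.

Lemma pairing_bd_cat c d g :
  pairing (bd (c ++ d)) g = pairing (bd c) g + pairing (bd d) g.
Proof. by rewrite !pairing_bd pairing_cat. Qed.

Lemma homologous_trans_sym (S : pred (seq T)) p c d e :
  homologous S p c e -> homologous S p d e -> homologous S p c d.
Proof.
case=> [e1 [/in_cx_normalize [e1' [E1 A1]] /chain_eqP B1]].
case=> [e2 [/in_cx_normalize [e2' [E2 A2]] /chain_eqP B2]].
apply: (homologous_intro (e := e1' ++ chain_opp e2')) => [|g].
  by rewrite all_cat A1 /chain_opp all_map; apply: sub_all A2 => x.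
rewrite !pairing_bd pairing_cat pairing_opp -E1 -E2 -!pairing_bd B1 B2.
by rewrite !pairing_sub; ring.
Qed.

Definition bd_simplex s : chain T :=
  [seq ((-1) ^+ i, face i s) | i <- iota 0 (size s)].

Lemma pairing_bd_simplex s g : pairing (bd_simplex s) g = cobd g s.
Proof. by rewrite /pairing /bd_simplex big_map. Qed.

Lemma mem_bd_simplex s y : y \in bd_simplex s ->
  exists2 i, (i < size s)%N & y.2 = face i s.
Proof. by case/mapP => i; rewrite mem_iota add0n => /andP[_ Hi] ->; exists i. Qed.

Definition cone (y : T) c : chain T := [seq (x.1, y :: x.2) | x <- c].

Lemma pairing_cone y c g : pairing (cone y c) g = pairing c (fun s => g (y :: s)).
Proof. by rewrite /pairing big_map. Qed.

Lemma pairing_bd_cone y c g :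
  pairing (bd (cone y c)) g = pairing c g - pairing (bd c) (fun u => g (y :: u)).
Proof.
rewrite pairing_bd pairing_cone pairing_bd -pairingB.
by apply: eq_pairing => s; rewrite cobd_cons.
Qed.

End Cochains.

Section LinearExtension.
Variables T U : eqType.
Implicit Types (c : chain T) (g : seq U -> int).

Definition scale_chain (k : int) (d : chain U) : chain U :=
  [seq (y.1 * k, y.2) | y <- d].

Definition lin (F : seq T -> chain U) c : chain U :=
  flatten [seq scale_chain x.1 (F x.2) | x <- c].

Lemma pairing_scale k d g : pairing (scale_chain k d) g = k * pairing d g.
Proof. by rewrite /pairing big_map mulr_sumr; apply: eq_bigr => y _ /=; ring. Qed.

Lemma pairing_lin F c g :
  pairing (lin F c) g = pairing c (fun s => pairing (F s) g).
Proof.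
elim: c => [|x c IH]; first by rewrite /= !pairing_nil.
by rewrite /lin /= pairing_cat pairing_scale pairing_cons -IH.
Qed.

Lemma eq_in_lin (F G : seq T -> chain U) c :
  (forall y, y \in c -> F y.2 = G y.2) -> lin F c = lin G c.
Proof. by move=> H; rewrite /lin; congr flatten; apply/eq_in_map => y /H ->. Qed.

Lemma all_lin (P : pred (seq U)) F c :
  (forall x, x \in c -> all (fun y => P y.2) (F x.2)) ->
  all (fun y => P y.2) (lin F c).
Proof.
elim: c => [|x c IH] H //=; rewrite all_cat; apply/andP; split.
  by rewrite all_map; apply: sub_all (H x (mem_head _ _)) => y.
by apply: IH => y yc; apply: H; rewrite inE yc orbT.
Qed.

Lemma face_map (f : T -> U) i s : face i (map f s) = map f (face i s).
Proof. by rewrite /face map_cat map_take map_drop. Qed.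

Lemma pairing_push (f : T -> U) c g :
  pairing (push f c) g = pairing c (fun s => g (map f s)).
Proof. by rewrite /pairing big_map. Qed.

Lemma cobd_map (f : T -> U) g s : cobd g (map f s) = cobd (fun u => g (map f u)) s.
Proof. by rewrite /cobd size_map; apply: eq_bigr => i _; rewrite face_map. Qed.

Definition vertex_chain (f : T -> U) (s : seq T) : chain U := [:: (1, map f s)].

Lemma pairing_vertex_chain (f : T -> U) s g :
  pairing (vertex_chain f s) g = g (map f s).
Proof. exact: pairing1. Qed.

Lemma pairing_bd_vertex_chain (f : T -> U) s g :
  pairing (bd (vertex_chain f s)) g =
  cobd (fun u => pairing (vertex_chain f u) g) s.
Proof.
rewrite pairing_bd pairing1 cobd_map.
by apply: eq_cobd => u; rewrite pairing1.
Qed.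

End LinearExtension.

Section Flags.
Variables (T : eqType) (le : rel T).

Lemma is_flag_cons x u :
  le x x -> is_flag le u -> all (fun y => le y x) u -> is_flag le (x :: u).
Proof.
move=> lxx fu ax; apply/allP => y; rewrite inE => /orP[/eqP->|yu].
  by rewrite /= lxx /=; apply/allP => z zu; rewrite (allP ax z zu) orbT.
by rewrite /= (allP ax y yu) /=; apply: (allP fu y yu).
Qed.

Lemma is_flag_consE x u :
  is_flag le (x :: u) -> is_flag le u /\ all (fun y => le x y || le y x) u.
Proof.
move=> /allP H; split; last by case/andP: (H x (mem_head _ _)).
apply/allP => y yu; have := H y; rewrite inE yu orbT => /(_ isT) /=.
by case/andP.
Qed.

Lemma sub_is_flag s s' : {subset s' <= s} -> is_flag le s -> is_flag le s'.
Proof.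
move=> sub /allP H; apply/allP => x xs; apply/allP => y ys.
exact: (allP (H x (sub x xs)) y (sub y ys)).
Qed.

Lemma flag_face (P : pred T) i s :
  all P s && is_flag le s -> all P (face i s) && is_flag le (face i s).
Proof.
case/andP => H1 H2; apply/andP; split.
  by apply/allP => x /mem_face; apply: (allP H1).
by apply: sub_is_flag H2 => x; apply: mem_face.
Qed.

Lemma is_flag_max s : transitive le -> is_flag le s -> s != [::] ->
  exists2 m, m \in s & all (fun y => le y m) s.
Proof.
move=> tr; elim: s => [|x s IH] // fl _.
have [fs ax] := is_flag_consE fl.
have lxx : le x x by move: fl => /allP /(_ x (mem_head _ _)) /= /andP[/orP[]].
have [->|sn] := altP (s =P [::]); first by exists x; rewrite ?mem_head //= lxx.
have [m ms am] := IH fs sn.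
have /orP[lxm|lmx] := allP ax m ms.
  by exists m; rewrite ?inE ?ms ?orbT //= lxm.
exists x; first exact: mem_head.
by rewrite /= lxx /=; apply/allP => y ys; apply: tr (allP am y ys) lmx.
Qed.

End Flags.

Lemma is_flag_map (T U : eqType) (le : rel T) (le' : rel U) (f : T -> U) s :
  {homo f : x y / le x y >-> le' x y} -> is_flag le s -> is_flag le' (map f s).
Proof.
move=> H /allP fl; apply/allP => _ /mapP[x xs ->]; apply/allP => _ /mapP[y ys ->].
by have /allP /(_ y ys) /orP[/H->|/H->] := fl x xs; rewrite ?orbT.
Qed.

Section SubdivisionChain.
Variables (X Y : eqType) (b : seq X -> Y).

Fixpoint sdc_rec (k : nat) (s : seq X) : chain Y :=
  if k is k'.+1 then (if s is [::] then [:: (1, [::])]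
                      else cone (b s) (lin (sdc_rec k') (bd_simplex s)))
  else [:: (1, [::])].

(* sd s = b s * sd (bd s); the fuel k = size s makes the recursion structural. *)
Definition sdc s := sdc_rec (size s) s.

Lemma sdc_cons x s : sdc (x :: s) = cone (b (x :: s)) (lin sdc (bd_simplex (x :: s))).
Proof.
rewrite /sdc /=; congr cone; apply: eq_in_lin => y /mem_bd_simplex [i Hi ->].
by rewrite /sdc size_face.
Qed.

Lemma pairing_bd_sdc s g : pairing (bd (sdc s)) g = cobd (fun f => pairing (sdc f) g) s.
Proof.
move: {2}(size s) (erefl (size s)) => k; elim: k s g => [|k IH] [|x s] g //=.
  by rewrite pairing_bd pairing1 /cobd !big_nil.
move=> [Hk]; rewrite sdc_cons pairing_bd_cone pairing_lin pairing_bd_simplex.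
rewrite [pairing (bd _) _]pairing_bd pairing_lin pairing_bd_simplex.
set h := fun u => g (b (x :: s) :: u).
rewrite (@eq_cobd_face _ (fun f => pairing (sdc f) (cobd h))
                         (cobd (fun f => pairing (sdc f) h))).
  by rewrite cobd_cobd subr0.
by move=> i Hi; rewrite -pairing_bd IH // size_face //= Hk.
Qed.

Variables (P : pred (seq X)) (le : rel Y) (good : pred Y).
Hypotheses (P_face : forall s i, P s -> P (face i s))
  (le_refl : reflexive le) (le_trans : transitive le)
  (b_mono : forall s i, P s -> (i < size s)%N -> face i s != [::] ->
              le (b (face i s)) (b s))
  (b_good : forall s, P s -> s != [::] -> good (b s)).

Definition sdc_cell s u := [&& size u == size s, is_flag le u,
  all (fun y => le y (b s)) u & all good u].

Lemma sdc_cells s : P s -> all (fun y => sdc_cell s y.2) (sdc s).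
Proof.
move: {2}(size s) (erefl (size s)) => k; elim: k s => [|k IH] [|x s] //=.
move=> [Hk] Ps; rewrite sdc_cons all_map.
apply: (@all_lin _ _ (fun u => sdc_cell (x :: s) (b (x :: s) :: u))).
move=> y /mem_bd_simplex [i Hi ->]; set f := face i (x :: s).
have sf : size f = k by rewrite /f size_face //= Hk.
apply: sub_all (IH f sf (P_face i Ps)) => z /andP[/eqP sz /and3P[fz lz gz]] /=.
have lz' : all (fun y => le y (b (x :: s))) z.2.
  have [f0|fn] := altP (f =P [::]).
    by move: sz; rewrite f0 /=; case: z.2 {fz lz gz}.
  by apply/allP => w wz; apply: le_trans (allP lz w wz) (b_mono Ps Hi fn).
rewrite /sdc_cell /= sz sf Hk eqxx le_refl lz' b_good //= gz andbT.
exact: is_flag_cons.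
Qed.

End SubdivisionChain.

(* Acyclic carriers.  phi and chi are chain maps from the complex S to the
   complex S' sending a simplex s into the part of S' spanned by the vertex
   set C s, on which a s is a cone point. *)
Section AcyclicCarrier.
Variables (X Y : eqType) (S : pred (seq X)) (S' : pred (seq Y)).
Variables (C : seq X -> pred Y) (a : seq X -> Y) (phi chi : seq X -> chain Y).
Hypotheses (S_face : forall s i, S s -> S (face i s))
  (phi_bd : forall s g, S s ->
     pairing (bd (phi s)) g = cobd (fun f => pairing (phi f) g) s)
  (chi_bd : forall s g, S s ->
     pairing (bd (chi s)) g = cobd (fun f => pairing (chi f) g) s)
  (phi_chi_nil : forall g, pairing (phi [::]) g = pairing (chi [::]) g)
  (phi_supp : forall s, S s -> s != [::] ->
     all (fun y => (size y.2 == size s) && S' y.2 && all (C s) y.2) (phi s))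
  (chi_supp : forall s, S s -> s != [::] ->
     all (fun y => (size y.2 == size s) && S' y.2 && all (C s) y.2) (chi s))
  (apex_in : forall s, S s -> s != [::] -> a s \in C s)
  (apex_cone : forall s u, S s -> s != [::] -> S' u -> all (C s) u ->
     S' (a s :: u))
  (C_mono : forall s i, S s -> (i < size s)%N -> face i s != [::] ->
     {subset C (face i s) <= C s}).

Fixpoint htpy_rec (k : nat) (s : seq X) : chain Y :=
  if k is k'.+1 then (if s is [::] then [::]
     else cone (a s) (phi s ++ chain_opp (chi s) ++
                      chain_opp (lin (htpy_rec k') (bd_simplex s))))
  else [::].

Definition htpy s := htpy_rec (size s) s.

Lemma htpy_cons x s : htpy (x :: s) =
  cone (a (x :: s)) (phi (x :: s) ++ chain_opp (chi (x :: s)) ++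
                     chain_opp (lin htpy (bd_simplex (x :: s)))).
Proof.
rewrite /htpy /=; congr cone; congr (_ ++ _ ++ chain_opp _).
by apply: eq_in_lin => y /mem_bd_simplex [i Hi ->]; rewrite /htpy size_face.
Qed.

Lemma pairing_bd_htpy s g : S s -> pairing (bd (htpy s)) g =
  pairing (phi s) g - pairing (chi s) g - cobd (fun f => pairing (htpy f) g) s.
Proof.
move: {2}(size s) (erefl (size s)) => k; elim: k s g => [|k IH] [|x s] g //=.
  by move=> _ _; rewrite /htpy /= pairing_nil /cobd big_nil phi_chi_nil !subrr.
move=> [Hk] Ss; rewrite htpy_cons pairing_bd_cone.
set h := fun u => g (a (x :: s) :: u).
rewrite [pairing (bd _) h]pairing_bd !pairing_cat !pairing_opp pairing_lin.
rewrite pairing_bd_simplex -(pairing_bd (phi _) h) -(pairing_bd (chi _) h).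
rewrite phi_bd // chi_bd // pairing_lin pairing_bd_simplex.
rewrite (@eq_cobd_face _ (fun f => pairing (htpy f) (cobd h))
  (fun f => pairing (phi f) h - pairing (chi f) h
            - cobd (fun f' => pairing (htpy f') h) f)); last first.
  move=> i Hi; rewrite -(pairing_bd (htpy _) h) IH //; last exact: S_face.
  by rewrite size_face //= Hk.
rewrite !cobdB cobd_cobd subr0; ring.
Qed.

Lemma htpy_supp s : S s -> s != [::] ->
  all (fun y => (size y.2 == (size s).+1) && S' y.2 && all (C s) y.2) (htpy s).
Proof.
move: {2}(size s) (erefl (size s)) => k; elim: k s => [|k IH] [|x s] //=.
move=> [Hk] Ss _; rewrite htpy_cons all_map.
set Q := fun u => (size u == size (x :: s)) && S' u && all (C (x :: s)) u.
have Qbd : all (fun y => Q y.2) (lin htpy (bd_simplex (x :: s))).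
  apply: all_lin => y /mem_bd_simplex [i Hi ->]; set f := face i (x :: s).
  have [->|fn] := altP (f =P [::]); first by rewrite /htpy.
  have sf : size f = k by rewrite /f size_face.
  apply: sub_all (IH f sf (S_face i Ss) fn) => z /andP[/andP[/eqP sz S'z] Cz].
  rewrite /Q sz sf /= Hk eqxx S'z /=.
  by apply/allP => w wz; apply: (C_mono Ss Hi fn); apply: (allP Cz).
have Qall : all (fun y => Q y.2)
    (phi (x :: s) ++ chain_opp (chi (x :: s)) ++ chain_opp (lin htpy (bd_simplex (x :: s)))).
  by rewrite !all_cat phi_supp // /chain_opp !all_map chi_supp.
apply: sub_all Qall => y /andP[/andP[/eqP sz S'y] Cy] /=.
by rewrite sz eqxx apex_cone //= Cy andbT; apply: apex_in.
Qed.

Lemma htpy_cycle (c : chain X) g :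
  all (fun x => S x.2) c -> (forall h, pairing (bd c) h = 0) ->
  pairing (lin phi c) g - pairing (lin chi c) g = pairing (bd (lin htpy c)) g.
Proof.
move=> Sc cyc; rewrite pairing_bd (pairing_lin htpy).
rewrite (@eq_in_pairing _ c _ (fun s => pairing (phi s) g - pairing (chi s) g
    - cobd (fun f => pairing (htpy f) g) s)); last first.
  by move=> y yc; rewrite -pairing_bd pairing_bd_htpy //; apply: (allP Sc).
by rewrite !pairingB -(pairing_bd c (fun f => pairing (htpy f) g)) cyc subr0 !pairing_lin.
Qed.

End AcyclicCarrier.

Section SpanSubdivision.
Variables (A : idomainType) (M : lmodType A) (V : vectType {fraction A}).
Variables (iota : M -> V) (n : nat).
Hypotheses (TF : torsion_free M) (FT : is_frac_tensor iota)
  (dimV : \dim (fullv : {vspace V}) = n).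

Lemma iota_neq0 m : m != 0 -> iota m != 0.
Proof.
move=> m0; apply/eqP => im; case: FT => _ _ _ /(_ m) [/(_ im) [a [a0 am]] _].
by case: (TF am) => /eqP; rewrite ?(negbTE a0) ?(negbTE m0).
Qed.

Lemma rankS (t t' : seq M) : {subset t <= t'} -> (rank iota t <= rank iota t')%N.
Proof. by move=> sub; apply/dimvS/sub_span => _ /mapP[m /sub mt ->]; apply: map_f. Qed.

Lemma rank_lt_proper (v : 'I_n -> M) (t : seq M) (U : {set 'I_n}) : U != setT ->
  (forall m, m \in t -> exists2 i, i \in U & m = v i) -> (rank iota t < n)%N.
Proof.
move=> UT tU; apply: (@leq_ltn_trans (\dim <<[seq iota (v i) | i in U]>>%VS)).
  apply/dimvS/sub_span => _ /mapP[m /tU [i iU ->] ->].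
  by apply/mapP; exists i; rewrite ?mem_enum.
apply: leq_ltn_trans (dim_span _) _; rewrite size_map -cardE.
by have := proper_card (A := U) (B := setT); rewrite properT cardsT card_ord; apply.
Qed.

Lemma span_neq_fullv (t : seq M) : (rank iota t < n)%N -> <<map iota t>>%VS != fullv.
Proof. by move=> tn; apply: contraTneq tn => E; rewrite /rank E dimV ltnn. Qed.

Lemma span_neq0 (t : seq M) m : m \in t -> m != 0 -> <<map iota t>>%VS != 0%VS.
Proof.
move=> mt m0; apply: contraNneq (iota_neq0 m0) => E.
by rewrite -memv0 -E memv_span // map_f.
Qed.

Lemma Estar_face t i : Estar_cx iota n t -> Estar_cx iota n (face i t).
Proof.
case/andP => t0 tn; apply/andP; split.
  by apply/allP => m /mem_face mt; apply: (allP t0).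
by apply: leq_ltn_trans tn; apply/rankS/mem_face.
Qed.

Lemma tits_vertex_span t : Estar_cx iota n t -> t != [::] ->
  tits_vertex <<map iota t>>%VS.
Proof.
case/andP; case: t => // m t /andP[m0 _] tn _.
by rewrite /tits_vertex span_neq_fullv // (span_neq0 (mem_head m t) m0).
Qed.

Definition span_sd := sdc (fun t : seq M => <<map iota t>>%VS).

Lemma span_sd_cells t : Estar_cx iota n t ->
  all (fun y => [&& size y.2 == size t, tits_cx y.2 &
                    all (fun U => U <= <<map iota t>>)%VS y.2]) (span_sd t).
Proof.
move=> Et; have span_face s i : (<<map iota (face i s)>> <= <<map iota s>>)%VS.
  by apply: sub_span => _ /mapP[m /mem_face ms ->]; apply: map_f.
have := @sdc_cells _ _ (fun t : seq M => <<map iota t>>%VS) (Estar_cx iota n)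
  (fun U W => (U <= W)%VS) (@tits_vertex _ V) (fun s i => @Estar_face s i)
  (@subvv _ _) (@subv_trans _ _) (fun s i _ _ _ => span_face s i)
  tits_vertex_span t Et.
by apply: sub_all => y /and4P[-> fl le tv]; rewrite /tits_cx tv fl le.
Qed.

End SpanSubdivision.

Lemma pick_idx_in n (I : {set 'I_n}) : I != set0 ->
  exists2 j, j \in I & pick_idx I = val j.
Proof.
case/set0Pn => j jI; rewrite /pick_idx.
have : j \in enum I by rewrite mem_enum.
case E: (enum I) => [|k r] //= _; exists k; last by rewrite /image_mem E.
by rewrite -mem_enum E mem_head.
Qed.

Lemma pick_vertex_in (A : idomainType) (M : lmodType A) (Y : {fset M}) :
  Y != fset0%fset -> pick_vertex Y \in Y.
Proof.
case/fset0Pn => x xY; rewrite /pick_vertex.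
have : x \in enum_fset Y by [].
case E: (enum_fset Y) => [|y r] //= _.
by rewrite -[y \in Y]/(y \in enum_fset Y) E mem_head.
Qed.

Section SubdividedSimplex.
Variable n : nat.
Hypothesis n_ge2 : (2 <= n)%N.

Definition index_set (t : seq nat) : {set 'I_n} := [set i : 'I_n | val i \in t].
Definition sd_Delta := sdc index_set.
Definition sd_simplex := sd_Delta (iota 0 n).

Lemma Delta_iota : Delta_cx n (iota 0 n).
Proof. by apply/allP => j; rewrite mem_iota. Qed.

Lemma Delta_face t i : Delta_cx n t -> Delta_cx n (face i t).
Proof. by move=> tn; apply/allP => j /mem_face jt; apply: (allP tn). Qed.

Lemma sd_Delta_cells t : Delta_cx n t -> all (fun y =>
  sdc_cell index_set (fun I J : {set 'I_n} => I \subset J) (fun I => I != set0)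
           t y.2) (sd_Delta t).
Proof.
apply: sdc_cells.
- by move=> s i; apply: Delta_face.
- exact: subxx.
- by move=> x y z; apply: subset_trans.
- by move=> s i _ _ _; apply/subsetP => j; rewrite !inE; apply: mem_face.
- case=> // j s /= /andP[jn _] _; apply/set0Pn; exists (Ordinal jn).
  by rewrite inE mem_head.
Qed.

Lemma notin_face_iota i : (i < n)%N -> i \notin face i (iota 0 n).
Proof.
move=> ltin; rewrite /face take_iota drop_iota mem_cat !mem_iota /=.
by rewrite (minn_idPl (ltnW ltin)) !add0n; apply/negP => /orP[]; lia.
Qed.

Lemma size_face_iota i : (i < n)%N -> size (face i (iota 0 n)) = n.-1.
Proof. by move=> ltin; rewrite size_face ?size_iota. Qed.

(* The homotopy, on Delta_n, between pick_idx o sd and the identity; the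
   carrier of a simplex t is the face spanned by t, with apex its first vertex. *)
Definition pick_sd_Delta (t : seq nat) : chain nat := push (@pick_idx n) (sd_Delta t).
Definition Delta_htpy :=
  htpy (fun t : seq nat => head 0%N t) pick_sd_Delta (vertex_chain id).

Lemma pairing_bd_pick_sd_Delta s g :
  pairing (bd (pick_sd_Delta s)) g = cobd (fun f => pairing (pick_sd_Delta f) g) s.
Proof.
rewrite pairing_bd pairing_push (eq_pairing _ (fun u => cobd_map _ g u)).
rewrite -pairing_bd pairing_bd_sdc.
by apply: eq_cobd => u; rewrite pairing_push.
Qed.

Lemma pick_sd_Delta_supp s : Delta_cx n s -> all (fun y =>
  (size y.2 == size s) && Delta_cx n y.2 && all (mem s) y.2) (pick_sd_Delta s).
Proof.
move=> Ds; rewrite /pick_sd_Delta all_map; apply: sub_all (sd_Delta_cells Ds) => y.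
case/and4P => /eqP sz _ le ne /=; rewrite size_map sz eqxx /=.
have pick_in I : I \in y.2 -> (pick_idx I < n)%N && (pick_idx I \in s).
  move=> Iy; have [j jI ->] := pick_idx_in (allP ne I Iy).
  by rewrite ltn_ord /=; have := subsetP (allP le I Iy) j jI; rewrite inE.
by apply/andP; split; apply/allP => _ /mapP[I /pick_in /andP[? ?] ->].
Qed.

Lemma Delta_htpy_supp s : Delta_cx n s -> s != [::] -> all (fun y =>
  (size y.2 == (size s).+1) && Delta_cx n y.2 && all (mem s) y.2) (Delta_htpy s).
Proof.
apply: htpy_supp.
- by move=> t i; apply: Delta_face.
- by move=> t Dt _; apply: pick_sd_Delta_supp.
- by move=> t Dt _; rewrite /= map_id eqxx Dt andbT; apply/allP.
- by case=> // x t _ _; apply: mem_head.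
- by move=> [//|x t] u /andP[xn _] _ Du _ /=; rewrite xn Du.
- by move=> t i _ _ _ j; apply: mem_face.
Qed.

Lemma sd_simplex_in_cx : in_cx (@sdDelta_cx n) n.-1 sd_simplex.
Proof.
apply: all_in_cx; apply: sub_all (sd_Delta_cells Delta_iota) => y /and4P[/eqP sz fl _ ne].
by rewrite sz size_iota prednK ?(ltnW n_ge2) // eqxx /sdDelta_cx ne fl.
Qed.

Lemma bd_sd_simplex_in_cx : in_cx (@Sigma_cx n) n.-2 (bd sd_simplex).
Proof.
apply: (@in_cx_chain_eq _ _ _ (lin sd_Delta (bd_simplex (iota 0 n)))).
  by apply/chain_eqP => g; rewrite pairing_lin pairing_bd_simplex pairing_bd_sdc.
apply: all_in_cx; apply: (@all_lin _ _ (fun u => (size u == n.-2.+1) && Sigma_cx u)).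
move=> y /mem_bd_simplex [i]; rewrite size_iota => ltin ->.
apply: sub_all (sd_Delta_cells (Delta_face i Delta_iota)) => z /and4P[/eqP sz fl le ne].
have -> : n.-2.+1 = n.-1 by case: n n_ge2 => [|[|k]].
rewrite sz size_face_iota // eqxx /=.
rewrite /Sigma_cx fl andbT; apply/allP => I Iz; rewrite (allP ne I Iz) /=.
apply: contraTneq (allP le I Iz) => ->; apply/subsetPn; exists (Ordinal ltin) => //.
by rewrite inE (negbTE (notin_face_iota ltin)).
Qed.

Lemma lin_Delta_htpy_bd_in_cx :
  in_cx (bDelta_cx n) n.-1 (lin Delta_htpy (bd_simplex (iota 0 n))).
Proof.
apply: all_in_cx; apply: (@all_lin _ _ (fun u => (size u == n.-1.+1) && bDelta_cx n u)).
move=> y /mem_bd_simplex [i]; rewrite size_iota => ltin ->.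
have face_nil : face i (iota 0 n) != [::].
  by rewrite -size_eq0 size_face_iota //; case: n n_ge2 => [|[|k]].
apply: sub_all (Delta_htpy_supp (Delta_face i Delta_iota) face_nil) => z.
case/andP=> /andP[/eqP sz Dz] Cz; rewrite sz size_face_iota // eqxx /=.
apply/andP; split; first exact: Dz.
apply/negP => /allP /(_ i); rewrite mem_iota add0n ltin => /(_ isT) iz.
exact: (negP (notin_face_iota ltin)) (allP Cz i iz).
Qed.

Lemma Delta_htpy_in_cx : in_cx (Delta_cx n) n (Delta_htpy (iota 0 n)).
Proof.
have nil_n : iota 0 n != [::] by case: n n_ge2.
apply: all_in_cx; apply: sub_all (Delta_htpy_supp Delta_iota nil_n).
by move=> z /andP[/andP[/eqP sz ->] _]; rewrite sz size_iota eqxx.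
Qed.

Lemma pairing_bd_Delta_htpy s g : Delta_cx n s ->
  pairing (bd (Delta_htpy s)) g = pairing (pick_sd_Delta s) g
    - pairing (vertex_chain id s) g - cobd (fun f => pairing (Delta_htpy f) g) s.
Proof.
apply: pairing_bd_htpy => [t i|t h _|t h _|//].
- exact: Delta_face.
- exact: pairing_bd_pick_sd_Delta.
- exact: pairing_bd_vertex_chain.
Qed.

(* pick_idx o sd_simplex = (0,...,n-1) + D(bd (0,...,n-1)) + bd D(0,...,n-1). *)
Lemma zeta_rep_sd_simplex : zeta_rep sd_simplex.
Proof.
split; [exact: sd_simplex_in_cx | exact: bd_sd_simplex_in_cx |].
exists (lin Delta_htpy (bd_simplex (iota 0 n))), (Delta_htpy (iota 0 n)).
split; [exact: lin_Delta_htpy_bd_in_cx | exact: Delta_htpy_in_cx |].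
apply/chain_eqP => g.
rewrite pairing_sub pairing_cat pairing_bd_Delta_htpy ?Delta_iota //.
rewrite pairing_lin pairing_bd_simplex pairing_vertex_chain map_id.
by rewrite /pick_sd_Delta /sd_simplex /simplex_chain pairing1; ring.
Qed.

End SubdividedSimplex.

Lemma is_cycle_push_bd (T U : eqType) (f : T -> U) (w : chain T) :
  is_cycle (push f (bd w)).
Proof.
apply/chain_eqP => g; rewrite pairing_nil pairing_bd pairing_push.
by rewrite (eq_pairing _ (fun s => cobd_map f g s)) -pairing_bd pairing_bd_bd.
Qed.

Section ModularSymbolCycle.
Variables (A : idomainType) (M : lmodType A) (V : vectType {fraction A}).
Variables (iota : M -> V) (n : nat) (v : 'I_n -> M).
Hypotheses (n_ge2 : (2 <= n)%N) (v_neq0 : forall i, v i != 0).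
Implicit Types (I : {set 'I_n}) (s : seq {set 'I_n}) (m : M).

Definition vset (I : {set 'I_n}) : {fset M} := [fset v i | i in I]%fset.

(* v indexed by naturals, with the junk value 0 outside [0, n). *)
Definition vnat (k : nat) : M := if insub k is Some i then v i else 0.

Definition idx_union (s : seq {set 'I_n}) : {set 'I_n} :=
  [set i : 'I_n | has (fun I : {set 'I_n} => i \in I) s].

Definition among_v (s : seq {set 'I_n}) : pred M :=
  fun m => [exists i in idx_union s, m == v i].

(* The homotopy on Sigma_n between pick_vertex o vset and vnat o pick_idx:
   a flag s is carried by the v_i with i in the union of s. *)
Definition vset_htpy := htpy (fun s => vnat (pick_idx (idx_union s)))
  (vertex_chain (fun I => pick_vertex (vset I)))
  (vertex_chain (fun I => vnat (pick_idx I))).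

Lemma vnat_val (j : 'I_n) : vnat (val j) = v j.
Proof. by rewrite /vnat valK. Qed.

Lemma vsetP m I : m \in vset I -> exists2 j, j \in I & m = v j.
Proof. by move/imfsetP. Qed.

Lemma mem_vset (j : 'I_n) I : j \in I -> v j \in vset I.
Proof. by move=> jI; apply/imfsetP; exists j. Qed.

Lemma vset_neq0 I : I != set0 -> vset I != fset0%fset.
Proof. by case/set0Pn => j jI; apply/fset0Pn; exists (v j); apply: mem_vset. Qed.

Lemma vnat_pick_idx I : I != set0 -> exists2 j, j \in I & vnat (pick_idx I) = v j.
Proof. by case/pick_idx_in => j jI ->; exists j; rewrite ?vnat_val. Qed.

Lemma pick_vertex_vset I : I != set0 -> exists2 j, j \in I & pick_vertex (vset I) = v j.
Proof. by move/vset_neq0/pick_vertex_in/vsetP. Qed.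

Lemma among_v_v s I j : I \in s -> j \in I -> among_v s (v j).
Proof.
by move=> Is jI; apply/existsP; exists j; rewrite eqxx andbT inE; apply/hasP; exists I.
Qed.

Lemma idx_union_proper s : Sigma_cx s -> s != [::] -> idx_union s != setT.
Proof.
case/andP => s_ne fl s0.
have [m ms max_m] := is_flag_max (fun I J K => @subset_trans _ J I K) fl s0.
have /andP[_ mT] := allP s_ne m ms; apply: contraNneq mT => E.
apply/eqP/setP => j; rewrite inE; have : j \in idx_union s by rewrite E inE.
by rewrite inE => /hasP[I Is jI]; apply: subsetP (allP max_m I Is) j jI.
Qed.

Lemma among_v_rank s u : Sigma_cx s -> s != [::] -> all (among_v s) u ->
  (rank iota u < n)%N.
Proof.
move=> Ss s0 Cu; apply: (rank_lt_proper iota (idx_union_proper Ss s0)) => m mu.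
by have /existsP[j /andP[jU /eqP ->]] := allP Cu m mu; exists j.
Qed.

Lemma apex_among_v s : Sigma_cx s -> s != [::] ->
  exists2 j, j \in idx_union s & vnat (pick_idx (idx_union s)) = v j.
Proof.
case: s => // I s /andP[/andP[/andP[/set0Pn[j jI] _] _] _] _.
by apply: vnat_pick_idx; apply/set0Pn; exists j; rewrite inE /= jI.
Qed.

Lemma vertex_chain_among_v (f : {set 'I_n} -> M) s :
  (forall I, I != set0 -> exists2 j, j \in I & f I = v j) ->
  Sigma_cx s -> s != [::] -> all (fun y => (size y.2 == size s) &&
    Estar_cx iota n y.2 && all (among_v s) y.2) (vertex_chain f s).
Proof.
move=> fv Ss s0; have /andP[s_ne _] := Ss.
have fs I : I \in s -> among_v s (f I) && (f I != 0).
  move=> Is; have /andP[I0 _] := allP s_ne I Is.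
  by have [j jI ->] := fv I I0; rewrite v_neq0 (among_v_v Is jI).
have Cu : all (among_v s) (map f s).
  by apply/allP => _ /mapP[I /fs /andP[? _] ->].
rewrite /= size_map eqxx Cu !andbT /Estar_cx (among_v_rank Ss s0 Cu) andbT.
by apply/allP => _ /mapP[I /fs /andP[_ ?] ->].
Qed.

Lemma vset_htpy_supp s : Sigma_cx s -> s != [::] -> all (fun y =>
  (size y.2 == (size s).+1) && Estar_cx iota n y.2 && all (among_v s) y.2)
  (vset_htpy s).
Proof.
apply: htpy_supp => [t i|t St t0|t St t0|t St t0|t u St t0 /andP[u0 _] Cu|t i _ _ _ m].
- exact: flag_face.
- exact: vertex_chain_among_v pick_vertex_vset St t0.
- exact: vertex_chain_among_v vnat_pick_idx St t0.
- by have [j jU ->] := apex_among_v St t0; apply/existsP; exists j; rewrite jU eqxx.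
- have [j jU E] := apex_among_v St t0.
  rewrite /Estar_cx /= E v_neq0 u0 (among_v_rank St t0) //= Cu andbT.
  by apply/existsP; exists j; rewrite jU eqxx.
- case/existsP => j /andP[jU /eqP ->]; apply/existsP; exists j; rewrite eqxx andbT.
  by move: jU; rewrite !inE => /hasP[I /mem_face Is jI]; apply/hasP; exists I.
Qed.

Lemma Estar_vset I : I != set0 -> I != setT -> Estar_simplex iota n (vset I).
Proof.
move=> I0 IT; rewrite /Estar_simplex vset_neq0 //=; apply/andP; split.
  by apply/allP => m /vsetP[j _ ->].
by apply: (rank_lt_proper iota IT) => m /vsetP[j jI ->]; exists j.
Qed.

Lemma push_vset_in_cx p c :
  in_cx (@Sigma_cx n) p c -> in_cx (sdEstar_cx iota n) p (push vset c).
Proof.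
case/in_cx_normalize => c' [Ec' Ac'].
apply: (@in_cx_chain_eq _ _ _ (push vset c')).
  by apply/chain_eqP => g; rewrite !pairing_push Ec'.
have vset_mono I (J : {set 'I_n}) : I \subset J -> (vset I `<=` vset J)%fset.
  by move/subsetP => IJ; apply/fsubsetP => m /vsetP[j /IJ jJ ->]; apply: mem_vset.
apply: all_in_cx; rewrite all_map; apply: sub_all Ac' => x /andP[sz /andP[x_ne fl]] /=.
rewrite size_map sz /sdEstar_cx (is_flag_map vset_mono fl) andbT /=.
by apply/allP => _ /mapP[I /(allP x_ne) /andP[I0 IT] ->]; apply: Estar_vset.
Qed.

Lemma lin_vset_htpy_in_cx c :
  all (fun x => (size x.2 == n.-2.+1) && Sigma_cx x.2) c ->
  all (fun y => (size y.2 == n.-2.+2) && Estar_cx iota n y.2) (lin vset_htpy c).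
Proof.
move=> Ac; apply: (@all_lin _ _ (fun u => (size u == n.-2.+2) && Estar_cx iota n u)).
move=> x xc; have /andP[/eqP sz Sx] := allP Ac x xc.
have x0 : x.2 != [::] by rewrite -size_eq0 sz.
apply: sub_all (vset_htpy_supp Sx x0) => y /andP[/andP[/eqP -> ->] _].
by rewrite sz eqxx.
Qed.

Lemma push_vnat_in_cx a :
  all (fun x => (size x.2 == n.-1.+1) && bDelta_cx n x.2) a ->
  all (fun y => (size y.2 == n.-2.+2) && Estar_cx iota n y.2) (push vnat a).
Proof.
move=> Aa; rewrite all_map; apply: sub_all Aa => x /andP[/eqP sz /andP[xn x_not_all]] /=.
have -> : n.-2.+2 = n.-1.+1 by case: n n_ge2 => [|[|k]].
rewrite size_map sz eqxx /=.
have [j0 j0n j0x] : exists2 j0, (j0 < n)%N & j0 \notin x.2.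
  by case/allPn: x_not_all => j0; rewrite mem_iota add0n => /andP[_ ?] ?; exists j0.
have vnat_x m : m \in map vnat x.2 -> exists2 i, i \in [set~ Ordinal j0n] & m = v i.
  case/mapP => j jx ->; exists (Ordinal (allP xn j jx)); last by rewrite -vnat_val.
  by rewrite !inE; apply: contraNneq j0x => /(congr1 val) /= <-.
apply/andP; split; first by apply/allP => m /vnat_x [i _ ->].
apply: (rank_lt_proper iota _ vnat_x); apply/eqP => /setP /(_ (Ordinal j0n)).
by rewrite !inE eqxx.
Qed.

Lemma enum_v_vnat : [seq v i | i <- enum 'I_n] = map vnat (seq.iota 0 n).
Proof. by rewrite -val_enum_ord -map_comp; apply: eq_map => i /=; rewrite vnat_val. Qed.

Lemma pairing_vnat_pick_bd (w a b : chain _) g :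
  chain_eq (chain_sub (push (@pick_idx n) w) (simplex_chain n)) (a ++ bd b) ->
  pairing (push (fun I => vnat (pick_idx I)) (bd w)) g =
  pairing (bd [:: (1, [seq v i | i <- enum 'I_n])]) g
    + pairing a (cobd (fun u => g (map vnat u))).
Proof.
move/chain_eqP => rel; set G := fun u => g (map vnat u).
have E : pairing (push (@pick_idx n) w) (cobd G) =
         cobd G (seq.iota 0 n) + pairing a (cobd G).
  have := rel (cobd G).
  rewrite pairing_sub pairing_cat /simplex_chain pairing1 -(pairing_bd (bd b)).
  by rewrite pairing_bd_bd addr0 => /eqP; rewrite subr_eq addrC => /eqP.
rewrite enum_v_vnat pairing_bd pairing1 cobd_map -/G -E.
rewrite !pairing_push pairing_bd; apply: eq_pairing => s.
by rewrite cobd_map; apply: eq_cobd => u; rewrite /G -map_comp.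
Qed.

Lemma vset_htpy_cycle (c : chain {set 'I_n}) g :
  all (fun x => Sigma_cx x.2) c -> (forall h, pairing (bd c) h = 0) ->
  pairing (lin (vertex_chain (fun I => pick_vertex (vset I))) c) g
    - pairing (lin (vertex_chain (fun I => vnat (pick_idx I))) c) g =
  pairing (bd (lin vset_htpy c)) g.
Proof.
apply: htpy_cycle => [s i|s h _|s h _|//].
- exact: flag_face.
- exact: pairing_bd_vertex_chain.
- exact: pairing_bd_vertex_chain.
Qed.

Lemma ar_rep_vset (w : chain {set 'I_n}) : zeta_rep w ->
  ar_rep iota n [:: (1, [seq v i | i <- enum 'I_n])] (push vset (bd w)).
Proof.
case=> _ bdw_cx [a [b [a_cx _ rel]]].
have [c [Ec Ac]] := in_cx_normalize bdw_cx.
have [a' [Ea' Aa']] := in_cx_normalize a_cx.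
split; [exact: push_vset_in_cx | exact: is_cycle_push_bd |].
exists (lin vset_htpy c ++ push vnat a'); split.
  by apply: all_in_cx; rewrite all_cat lin_vset_htpy_in_cx // push_vnat_in_cx.
have Sc : all (fun x => Sigma_cx x.2) c by apply: sub_all Ac => x /andP[].
have c_cycle h : pairing (bd c) h = 0 by rewrite pairing_bd -Ec -pairing_bd pairing_bd_bd.
apply/chain_eqP => g; set G := fun u => g (map vnat u).
have phi_c : pairing (lin (vertex_chain (fun I => pick_vertex (vset I))) c) g =
             pairing (push (@pick_vertex _ M) (push vset (bd w))) g.
  rewrite pairing_lin (eq_pairing _ (fun s => pairing_vertex_chain _ s g)) -Ec.
  by rewrite !pairing_push; apply: eq_pairing => s; rewrite -map_comp.
have chi_c : pairing (lin (vertex_chain (fun I => vnat (pick_idx I))) c) g =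
    pairing (bd [:: (1, [seq v i | i <- enum 'I_n])]) g + pairing a' (cobd G).
  rewrite pairing_lin (eq_pairing _ (fun s => pairing_vertex_chain _ s g)) -Ec.
  by rewrite -pairing_push (pairing_vnat_pick_bd _ rel) Ea'.
have bd_a' : pairing (bd (push vnat a')) g = pairing a' (cobd G).
  by rewrite pairing_bd pairing_push; apply: eq_pairing => s; rewrite cobd_map.
rewrite pairing_bd_cat pairing_sub -(vset_htpy_cycle g Sc c_cycle).
by rewrite phi_c chi_c bd_a'; ring.
Qed.

Lemma spanY_vset I : spanY iota (vset I) = phiQ iota v I.
Proof.
apply: eq_span => x; apply/mapP/mapP => [[m mI ->]|[i iI ->]].
  by have [j jI ->] := vsetP (mI : m \in vset I); exists j; rewrite ?mem_enum.
by exists (v i) => //; apply: mem_vset; rewrite -mem_enum.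
Qed.

Lemma push_spanY_vset (c : chain {set 'I_n}) :
  push (spanY iota) (push vset c) = push (phiQ iota v) c.
Proof.
rewrite /push -map_comp; apply: eq_map => x /=.
by rewrite -map_comp; congr (_, _); apply: eq_map => I; apply: spanY_vset.
Qed.

End ModularSymbolCycle.

Section SpanOfCycle.
Variables (A : idomainType) (M : lmodType A) (V : vectType {fraction A}).
Variables (iota : M -> V) (n : nat).
Hypotheses (TF : torsion_free M) (FT : is_frac_tensor iota)
  (dimV : \dim (fullv : {vspace V}) = n).
Implicit Types (Y : {fset M}) (s : seq {fset M}).

Definition flag_verts s : seq M := flatten (map (fun Y => enum_fset Y) s).
Definition top_span s : {vspace V} := <<map iota (flag_verts s)>>%VS.

(* The homotopy on sd E*(M) between span and span o sd o pick_vertex: a flag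
   is carried by the subspaces of the span of its top simplex. *)
Definition span_htpy := htpy top_span (vertex_chain (spanY iota))
  (fun s => span_sd iota (map (@pick_vertex _ M) s)).

Definition under_top s : pred {vspace V} :=
  fun U => tits_vertex U && (U <= top_span s)%VS.

Lemma mem_flag_verts m Y s : Y \in s -> m \in Y -> m \in flag_verts s.
Proof. by move=> Ys mY; apply/flatten_mapP; exists Y. Qed.

Lemma flag_vertsP m s : m \in flag_verts s -> exists2 Y, Y \in s & m \in Y.
Proof. by case/flatten_mapP => Y Ys mY; exists Y. Qed.

Lemma spanYS Y Y' : (Y `<=` Y')%fset -> (spanY iota Y <= spanY iota Y')%VS.
Proof.
by move/fsubsetP => YY'; apply: sub_span => _ /mapP[m /YY' mY ->]; apply: map_f.
Qed.

Lemma span_le_top_span Y s : Y \in s -> (spanY iota Y <= top_span s)%VS.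
Proof.
by move=> Ys; apply: sub_span => _ /mapP[m mY ->]; apply/map_f/(mem_flag_verts Ys).
Qed.

Lemma tits_vertex_spanY Y : Estar_simplex iota n Y -> tits_vertex (spanY iota Y).
Proof.
case/andP => /fset0Pn[m mY] EY; apply: (tits_vertex_span TF FT dimV EY).
by apply: contraTneq mY => E; rewrite -[m \in Y]/(m \in enum_fset Y) E.
Qed.

Lemma flag_verts_top s : sdEstar_cx iota n s -> s != [::] ->
  exists2 Y, Estar_simplex iota n Y & {subset flag_verts s <= Y}.
Proof.
case/andP => s_E fl s0; have [Y Ys maxY] := is_flag_max (@fsubset_trans _) fl s0.
exists Y; first exact: (allP s_E).
by move=> m /flag_vertsP [Y' /(allP maxY) /fsubsetP]; apply.
Qed.

Lemma rank_flag_verts s t : sdEstar_cx iota n s -> s != [::] ->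
  {subset t <= flag_verts s} -> (rank iota t < n)%N.
Proof.
move=> Ss s0 ts; have [Y /andP[_ /andP[_ rY]] sY] := flag_verts_top Ss s0.
by apply: leq_ltn_trans rY; apply: rankS => m /ts /sY.
Qed.

Lemma tits_vertex_top_span s : sdEstar_cx iota n s -> s != [::] ->
  tits_vertex (top_span s).
Proof.
move=> Ss s0; case: s s0 Ss => // Y s _ Ss.
have [/andP[/andP[Y0 _] _] _] := andP Ss.
have [m mY] := fset0Pn _ Y0.
apply: (tits_vertex_span TF FT dimV); last first.
  by apply: contraTneq (mem_flag_verts (mem_head Y s) mY) => ->.
rewrite /Estar_cx (rank_flag_verts Ss) // andbT.
apply/allP => x /flag_vertsP [Z Zs xZ].
have /andP[_ /andP[/allP Z0 _]] := allP (proj1 (andP Ss)) Z Zs.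
exact: Z0.
Qed.

Lemma Estar_pick_vertex s : sdEstar_cx iota n s -> s != [::] ->
  Estar_cx iota n (map (@pick_vertex _ M) s).
Proof.
move=> Ss s0; have /andP[s_E _] := Ss.
have pick_in Y : Y \in s -> pick_vertex Y \in Y.
  by move=> Ys; apply: pick_vertex_in; case/andP: (allP s_E Y Ys).
apply/andP; split.
  apply/allP => _ /mapP[Y Ys ->]; have /andP[_ /andP[/allP Y0 _]] := allP s_E Y Ys.
  exact: Y0 _ (pick_in Y Ys).
by apply: (rank_flag_verts Ss s0) => _ /mapP[Y Ys ->]; apply: mem_flag_verts (pick_in Y Ys).
Qed.

Lemma span_htpy_supp s : sdEstar_cx iota n s -> s != [::] -> all (fun y =>
  (size y.2 == (size s).+1) && tits_cx y.2 && all (under_top s) y.2) (span_htpy s).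
Proof.
apply: htpy_supp => [t i|t St t0|t St t0|t St t0|t u St t0 /andP[u_t u_fl] Cu|].
- exact: flag_face.
- have /andP[t_E t_fl] := St.
  rewrite /= size_map eqxx /tits_cx (is_flag_map spanYS t_fl) !andbT /=.
  apply/andP; split; apply/allP => _ /mapP[Y Yt ->].
    exact/tits_vertex_spanY/(allP t_E).
  by rewrite /under_top span_le_top_span // tits_vertex_spanY ?(allP t_E).
- have /andP[t_E _] := St.
  apply: sub_all (span_sd_cells TF FT dimV (Estar_pick_vertex St t0)).
  move=> y /and3P[sz /andP[y_t y_fl] y_le]; rewrite size_map in sz.
  rewrite sz /tits_cx y_t y_fl /=; apply/allP => U Uy.
  rewrite /under_top (allP y_t U Uy); apply: subv_trans (allP y_le U Uy) _.
  apply: sub_span => _ /mapP[_ /mapP[Y Yt ->] ->]; apply/map_f/(mem_flag_verts Yt).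
  by apply: pick_vertex_in; case/andP: (allP t_E Y Yt).
- by rewrite unfold_in /under_top tits_vertex_top_span // subvv.
- rewrite /tits_cx /= tits_vertex_top_span // u_t.
  by apply: is_flag_cons => //; apply/allP => U /(allP Cu) /andP[].
- move=> t i _ _ _ U /andP[tU le_U]; rewrite unfold_in /under_top tU.
  apply: subv_trans le_U _; apply: sub_span => _ /mapP[m /flag_vertsP[Y Yt mY] ->].
  by apply/map_f/(mem_flag_verts (mem_face Yt)).
Qed.

Lemma span_htpy_cycle c g :
  all (fun x => sdEstar_cx iota n x.2) c -> (forall h, pairing (bd c) h = 0) ->
  pairing (lin (vertex_chain (spanY iota)) c) g
    - pairing (lin (fun s => span_sd iota (map (@pick_vertex _ M) s)) c) g =
  pairing (bd (lin span_htpy c)) g.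
Proof.
apply: htpy_cycle => [s i|s h _|s h _|//].
- exact: flag_face.
- exact: pairing_bd_vertex_chain.
- by rewrite pairing_bd_sdc cobd_map.
Qed.

Lemma homologous_span_span_sd (Q : chain M) z : ar_rep iota n Q z ->
  homologous (tits_cx (V := V)) n.-2
    (push (spanY iota) z) (lin (span_sd iota) (bd Q)).
Proof.
case=> z_cx /chain_eqP z_cycle [d0 [d0_cx /chain_eqP d0_bd]].
have [c [Ec Ac]] := in_cx_normalize z_cx.
have [d [Ed Ad]] := in_cx_normalize d0_cx.
have Sc : all (fun x => sdEstar_cx iota n x.2) c by apply: sub_all Ac => x /andP[].
have c_cycle h : pairing (bd c) h = 0.
  by rewrite pairing_bd -Ec -pairing_bd z_cycle pairing_nil.
apply: (homologous_intro (e := lin span_htpy c ++ lin (span_sd iota) d)) => [|g].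
  rewrite all_cat; apply/andP.
  split; apply: (@all_lin _ _ (fun u => (size u == n.-2.+2) && tits_cx u)) => x.
    move=> /(allP Ac) /andP[/eqP sz Sx]; have x0 : x.2 != [::] by rewrite -size_eq0 sz.
    apply: sub_all (span_htpy_supp Sx x0) => y /andP[/andP[/eqP -> ->] _].
    by rewrite sz eqxx.
  move=> /(allP Ad) /andP[/eqP sz Ex].
  by apply: sub_all (span_sd_cells TF FT dimV Ex) => y /and3P[/eqP -> -> _]; rewrite sz eqxx.
set G := fun t => pairing (span_sd iota t) g.
have phi_c : pairing (lin (vertex_chain (spanY iota)) c) g =
             pairing (push (spanY iota) z) g.
  rewrite pairing_lin (eq_pairing _ (fun s => pairing_vertex_chain _ s g)).
  by rewrite -Ec pairing_push.
have chi_c : pairing (lin (fun s => span_sd iota (map (@pick_vertex _ M) s)) c) g =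
             pairing (lin (span_sd iota) (bd Q)) g + pairing d (cobd G).
  rewrite pairing_lin -Ec -[LHS]/(pairing z (fun s => G (map (@pick_vertex _ M) s))).
  rewrite -pairing_push; have /eqP := d0_bd G.
  by rewrite pairing_sub eq_sym subr_eq => /eqP ->; rewrite addrC pairing_lin (pairing_bd d0 G) Ed.
have bd_d : pairing (bd (lin (span_sd iota) d)) g = pairing d (cobd G).
  rewrite pairing_bd pairing_lin; apply: eq_pairing => s.
  by rewrite -pairing_bd pairing_bd_sdc.
rewrite pairing_bd_cat -(span_htpy_cycle g Sc c_cycle) phi_c chi_c bd_d.
by ring.
Qed.

End SpanOfCycle.

Theorem theorem6p1 (A : idomainType) (M : lmodType A)
    (V : vectType {fraction A}) (iota : M -> V) (n : nat) (v : 'I_n -> M) :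
  noetherian A -> fin_gen M -> torsion_free M -> is_frac_tensor iota ->
  \dim (fullv : {vspace V}) = n -> (2 <= n)%N ->
  (forall i, v i != 0) ->
  <<[seq iota (v i) | i <- enum 'I_n]>>%VS = fullv ->
  let Q : chain M := [:: (1%:Z, [seq v i | i <- enum 'I_n])] in
  [/\ exists z, ar_rep iota n Q z,
      exists w, @zeta_rep n w &
      forall z w, ar_rep iota n Q z -> @zeta_rep n w ->
        homologous (tits_cx (V := V)) n.-2
          (push (spanY iota) z) (push (phiQ iota v) (bd w))].
Proof.
move=> _ _ TF FT dimV n_ge2 v_neq0 _ Q.
have zeta_w0 := zeta_rep_sd_simplex n_ge2.
split; first by exists (push (vset v) (bd (sd_simplex n))); apply: ar_rep_vset.
  by exists (sd_simplex n).
move=> z w z_rep /(ar_rep_vset iota n_ge2 v_neq0) vset_rep.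
rewrite -push_spanY_vset.
exact: homologous_trans_sym (homologous_span_span_sd TF FT dimV z_rep)
                            (homologous_span_span_sd TF FT dimV vset_rep).
Qed.
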